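(* Let $u,v:\mathbb{C}\to\mathbb{R}$ be harmonic, $f=u+iv$, $\mathcal{R}_f=f(\mathbb{C})$, and suppose $\mathcal{D}(\mathcal{R}_f)$ contains no pair of antipodal points. Then there exist $\xi\in\partial\mathbb{D}$, $0<\phi<\pi/2$ and $\rho>0$ such that $$\mathcal{R}_f\subset\overline{D}(0,\rho)\cup\big(\mathbb{C}\setminus(\mathcal{C}_{i\xi,\phi}\cup\mathcal{C}^+_{\xi,\phi})\big).$$
   Context: $\partial\mathbb{D}$ is the unit circle; $\overline{D}(0,\rho)$ the closed disc of radius $\rho$ centered at $0$. For a set $\mathcal{R}\subset\mathbb{C}$, $e^{i\theta}\in\partial\mathbb{D}$ is an asymptotic direction of $\mathcal{R}$ if there exist $w_n\in\mathcal{R}$ and $\varepsilon_n>0$, $\varepsilon_n\to0$, with $\varepsilon_n w_n\to e^{i\theta}$; $\mathcal{D}(\mathcal{R})$ is the set of asymptotic directions. For $\xi=e^{i\beta}\in\partial\mathbb{D}$ and $0<\phi<\pi/2$: $\mathcal{C}_{\xi,\phi}=\{te^{i\theta}: t\in\mathbb{R},\ |\theta-\beta|\le\phi\}$ (whole cone) and $\mathcal{C}^+_{\xi,\phi}=\{te^{i\theta}: t\ge0,\ |\theta-\beta|\le\phi\}$ (half cone). *)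

From Stdlib Require Import Reals Lra.
From Coquelicot Require Import Coquelicot.
Open Scope R_scope.

Definition dx (u : C -> R) : C -> R := fun z => Derive (fun t => u (t, snd z)) (fst z).
Definition dy (u : C -> R) : C -> R := fun z => Derive (fun t => u (fst z, t)) (snd z).


Definition C2_plane (u : C -> R) : Prop :=
  (forall z : C,
     ex_derive (fun t => u (t, snd z)) (fst z) /\
     ex_derive (fun t => u (fst z, t)) (snd z) /\
     ex_derive (fun t => dx u (t, snd z)) (fst z) /\
     ex_derive (fun t => dx u (fst z, t)) (snd z) /\
     ex_derive (fun t => dy u (t, snd z)) (fst z) /\
     ex_derive (fun t => dy u (fst z, t)) (snd z)) /\
  (forall g, List.In g (u :: dx u :: dy u :: dx (dx u) :: dy (dx u) :: dx (dy u) :: dy (dy u) :: nil) ->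
     forall z : C, continuity_2d_pt (fun x y => g (x, y)) (fst z) (snd z)).

Definition harmonic (u : C -> R) : Prop :=
  C2_plane u /\ forall z : C, dx (dx u) z + dy (dy u) z = 0.

Definition cis (th : R) : C := (cos th, sin th).

Definition on_unit_circle (xi : C) : Prop := Cmod xi = 1.

Definition asymptotic_direction (Rs : C -> Prop) (d : C) : Prop :=
  on_unit_circle d /\
  exists (w : nat -> C) (eps : nat -> R),
    (forall n, Rs (w n)) /\ (forall n, 0 < eps n) /\
    is_lim_seq eps 0 /\
    filterlim (fun n => Cmult (RtoC (eps n)) (w n)) eventually (locally d).

Definition whole_cone (xi : C) (phi : R) (z : C) : Prop :=
  exists beta t th : R, xi = cis beta /\ Rabs (th - beta) <= phi /\
    z = Cmult (RtoC t) (cis th).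

Definition half_cone (xi : C) (phi : R) (z : C) : Prop :=
  exists beta t th : R, xi = cis beta /\ 0 <= t /\ Rabs (th - beta) <= phi /\
    z = Cmult (RtoC t) (cis th).

Definition closed_disc0 (rho : R) (z : C) : Prop := Cmod z <= rho.

From Stdlib Require Import Reals Lra Lia Classical ClassicalEpsilon.
From Coquelicot Require Import Coquelicot.
Open Scope R_scope.

(* The set D of asymptotic directions is closed in the unit circle.  If D met
   every antipodal pair {c, -c} but contained none, D and -D would split the
   circle into two disjoint closed sets; so some pair {c, -c} misses D, and
   since i c and -i c are not both in D, one may take xi = -i c or xi = i c so
   that xi, i xi and -i xi all lie outside D.  Each direction outside D has a
   closed sector around it in which R_f is bounded, and the three sectors
   cover the cones of the statement. *)

Lemma Rabs_sin_le (x : R) : Rabs (sin x) <= Rabs x.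
Proof.
  assert (Hpos : forall y, 0 < y -> Rabs (sin y) <= y).
  { intros y Hy. pose proof (sin_lt_x y Hy). pose proof (SIN_bound y).
    destruct (Rle_lt_dec y PI).
    - pose proof (sin_ge_0 y). rewrite Rabs_pos_eq; lra.
    - pose proof PI2_1. apply Rabs_le; lra. }
  destruct (Rtotal_order x 0) as [Hx|[->|Hx]].
  - pose proof (Hpos (- x) ltac:(lra)) as H. rewrite sin_neg, Rabs_Ropp in H.
    rewrite (Rabs_left x) by lra. exact H.
  - rewrite sin_0; lra.
  - rewrite (Rabs_pos_eq x) by lra. now apply Hpos.
Qed.

Lemma Cmod_cis (t : R) : Cmod (cis t) = 1.
Proof.
  assert (H : cos t ^ 2 + sin t ^ 2 = 1).
  { pose proof (sin2_cos2 t). unfold Rsqr in *. lra. }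
  unfold Cmod, cis; cbn [fst snd]. rewrite H. apply sqrt_1.
Qed.

Lemma Cmod_cis_sub_le (a b : R) : Cmod (cis a - cis b)%C <= Rabs (a - b).
Proof.
  assert (Hsqr : Cmod (cis a - cis b)%C = sqrt (2 * sin ((a - b) / 2))²).
  { unfold Cmod, cis; simpl. f_equal.
    replace (cos a + - cos b) with (cos a - cos b) by ring.
    replace (sin a + - sin b) with (sin a - sin b) by ring.
    rewrite form2, form4. pose proof (sin2_cos2 ((a + b) / 2)). unfold Rsqr in *. nra. }
  rewrite Hsqr, sqrt_Rsqr_abs, Rabs_mult, Rabs_pos_eq by lra.
  pose proof (Rabs_sin_le ((a - b) / 2)).
  replace (Rabs ((a - b) / 2)) with (Rabs (a - b) / 2) in *
    by (unfold Rdiv; rewrite Rabs_mult, (Rabs_pos_eq (/ 2)); lra).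
  lra.
Qed.

Lemma Copp_cis (t : R) : (- cis t)%C = cis (t + PI).
Proof. unfold cis, Copp; rewrite neg_cos, neg_sin; reflexivity. Qed.

Lemma Cmod_scal_cis (t th : R) : Cmod (t * cis th)%C = Rabs t.
Proof. rewrite Cmod_mult, Cmod_R, Cmod_cis; ring. Qed.

Lemma Ci_mul_Ci (x : C) : (Ci * (Ci * x))%C = (- x)%C.
Proof. destruct x; unfold Cmult, Ci, Copp; simpl; f_equal; ring. Qed.

Lemma Ci_mul_opp_Ci (x : C) : (Ci * - (Ci * x))%C = x.
Proof. destruct x; unfold Cmult, Ci, Copp; simpl; f_equal; ring. Qed.

Lemma Copp_involutive (x : C) : (- - x)%C = x.
Proof. ring. Qed.

Definition unit_dir (w : C) : C := (RtoC (/ Cmod w) * w)%C.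

Lemma unit_dir_scal (t : R) (c : C) : 0 < t -> Cmod c = 1 -> unit_dir (t * c)%C = c.
Proof.
  intros Ht Hc. unfold unit_dir.
  rewrite Cmod_mult, Cmod_R, Hc, Rmult_1_r, Rabs_pos_eq by lra.
  destruct c; unfold Cmult, RtoC; simpl; f_equal; field; lra.
Qed.

Definition escapes_toward (F : C -> Prop) (d : C) : Prop :=
  forall del rho, 0 < del -> exists w, F w /\ rho < Cmod w /\ Cmod (unit_dir w - d)%C < del.

Definition adherent (P : C -> Prop) (d : C) : Prop :=
  forall del, 0 < del -> exists d', P d' /\ Cmod (d' - d)%C < del.

Lemma escapes_toward_closed (F : C -> Prop) (d : C) :
  adherent (escapes_toward F) d -> escapes_toward F d.
Proof.
  intros Hd del rho Hdel.
  destruct (Hd (del / 2)) as [d' [Hd' Hdd']]; [lra|].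
  destruct (Hd' (del / 2) rho) as [w [Fw [Hrho Hw]]]; [lra|].
  exists w; split; [exact Fw|split; [exact Hrho|]].
  replace (unit_dir w - d)%C with ((unit_dir w - d') + (d' - d))%C by ring.
  eapply Rle_lt_trans; [apply Cmod_triangle|lra].
Qed.

Lemma eventually_inv_INR_S_lt (eps : R) : 0 < eps -> eventually (fun n => / INR (S n) < eps).
Proof.
  intros Heps. destruct (archimed_cor1 eps Heps) as [N [HN HN0]].
  exists N; intros n Hn. apply Rle_lt_trans with (/ INR N); [|exact HN].
  apply Rinv_le_contravar; [apply lt_0_INR; lia|apply le_INR; lia].
Qed.

Lemma escapes_toward_asymptotic_direction (F : C -> Prop) (d : C) :
  Cmod d = 1 -> escapes_toward F d -> asymptotic_direction F d.
Proof.
  intros Hd Hesc; split; [exact Hd|].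
  assert (HS : forall n, 0 < INR (S n)) by (intro n; apply lt_0_INR; lia).
  destruct (choice (fun n w => F w /\ INR (S n) < Cmod w /\
                               Cmod (unit_dir w - d)%C < / INR (S n))) as [w Hw].
  { intro n; apply Hesc, Rinv_0_lt_compat, HS. }
  exists w, (fun n => / Cmod (w n)); split; [|split; [|split]].
  - intro n; apply Hw.
  - intro n; destruct (Hw n) as (_ & Hwn & _); pose proof (HS n).
    apply Rinv_0_lt_compat; lra.
  - apply is_lim_seq_spec; intro eps.
    apply (filter_imp (fun n => / INR (S n) < eps));
      [|apply eventually_inv_INR_S_lt, cond_pos].
    intros n Hn; destruct (Hw n) as (_ & Hwn & _); pose proof (HS n).
    rewrite Rminus_0_r, Rabs_pos_eq by (left; apply Rinv_0_lt_compat; lra).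
    apply Rlt_trans with (/ INR (S n)); [apply Rinv_lt_contravar; nra|exact Hn].
  - apply filterlim_locally; intro eps.
    apply (filter_imp (fun n => / INR (S n) < eps));
      [|apply eventually_inv_INR_S_lt, cond_pos].
    intros n Hn; destruct (Hw n) as (_ & _ & Hwn).
    apply C_NormedModule_mixin_compat1.
    change (Cmod (unit_dir (w n) - d)%C < eps). lra.
Qed.

Lemma real_induction (Q : R -> Prop) (a b : R) :
  a <= b -> Q a ->
  (forall s, a < s <= b -> (forall t, a <= t < s -> Q t) -> Q s) ->
  (forall s, a <= s < b -> Q s -> exists del, 0 < del /\ forall t, s < t < s + del -> Q t) ->
  Q b.
Proof.
  intros Hab Qa Hclosed Hopen.
  set (E := fun x => a <= x <= b /\ forall t, a <= t <= x -> Q t).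
  assert (Ea : E a) by (split; [lra|intros t Ht; now replace t with a by lra]).
  destruct (completeness E) as [s [Hub Hlub]];
    [exists b; intros x [Hx _]; lra|now exists a|].
  assert (Has : a <= s) by now apply Hub.
  assert (Hsb : s <= b) by (apply Hlub; intros x [Hx _]; lra).
  assert (Hbelow : forall t, a <= t < s -> Q t).
  { intros t Ht. apply NNPP; intros HQt.
    enough (s <= t) by lra.
    apply Hlub; intros x [_ Hx]. apply Rnot_lt_le; intros Htx. apply HQt, Hx; lra. }
  assert (Qs : Q s).
  { destruct (Req_dec s a) as [->|Hsa]; [exact Qa|apply Hclosed; [lra|exact Hbelow]]. }
  destruct (Req_dec s b) as [<-|Hsb']; [exact Qs|exfalso].
  destruct (Hopen s ltac:(lra) Qs) as [del [Hdel Hdel']].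
  set (x := Rmin (s + del / 2) b).
  assert (Hx : s < x <= s + del / 2) by (split; [apply Rmin_glb_lt|apply Rmin_l]; lra).
  enough (E x) by (pose proof (Hub x H); lra).
  split; [split; [lra|apply Rmin_r]|].
  intros t Ht. destruct (Rlt_or_le t s) as [Hts|Hst]; [apply Hbelow; lra|].
  destruct (Req_dec t s) as [->|]; [exact Qs|apply Hdel'; lra].
Qed.

Lemma adherent_cis (P : C -> Prop) (s : R) :
  (forall del, 0 < del -> exists t, Rabs (t - s) < del /\ P (cis t)) -> adherent P (cis s).
Proof.
  intros H del Hdel. destruct (H del Hdel) as [t [Hts Pt]].
  exists (cis t); split; [exact Pt|].
  eapply Rle_lt_trans; [apply Cmod_cis_sub_le|exact Hts].
Qed.

Section AntipodalSelection.

Variable P : C -> Prop.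
Hypothesis P_closed : forall d, adherent P d -> P d.
Hypothesis P_or_opp : forall t, P (cis t) \/ P (- cis t)%C.
Hypothesis P_not_both : forall t, ~ (P (cis t) /\ P (- cis t)%C).

Lemma antipodal_selection_right_open (s : R) :
  P (cis s) -> exists del, 0 < del /\ forall t, s < t < s + del -> P (cis t).
Proof.
  intros Ps. apply NNPP; intros Hnot.
  (* Otherwise [- cis t] lies in [P] for [t > s] arbitrarily close to [s],
     hence so does [- cis s]. *)
  apply (P_not_both s); split; [exact Ps|].
  rewrite Copp_cis; apply P_closed, adherent_cis; intros del Hdel.
  apply NNPP; intros Hfar. apply Hnot; exists del; split; [exact Hdel|].
  intros t Ht. destruct (P_or_opp t) as [Pt|Pt]; [exact Pt|].
  exfalso; apply Hfar; exists (t + PI); split; [|now rewrite <- Copp_cis].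
  rewrite Rabs_pos_eq; lra.
Qed.

Lemma antipodal_selection_misses_circle (a : R) : ~ P (cis a).
Proof.
  intros Pa. apply (P_not_both a); split; [exact Pa|].
  rewrite Copp_cis.
  apply (real_induction (fun t => P (cis t)) a); [pose proof PI_RGT_0; lra|exact Pa| |].
  - intros s Hs Hbelow. apply P_closed, adherent_cis; intros del Hdel.
    exists (Rmax a (s - del / 2)); split; [|apply Hbelow; split; [apply Rmax_l|]].
    + unfold Rmax; destruct (Rle_dec a (s - del / 2)); rewrite Rabs_left; lra.
    + apply Rmax_lub_lt; lra.
  - intros s _; apply antipodal_selection_right_open.
Qed.

End AntipodalSelection.

Lemma closed_antipodal_free (P : C -> Prop) :
  (forall d, adherent P d -> P d) ->
  (forall t, ~ (P (cis t) /\ P (- cis t)%C)) ->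
  exists t, ~ P (cis t) /\ ~ P (- cis t)%C.
Proof.
  intros P_closed P_not_both. apply NNPP; intros Hnone.
  assert (P_or_opp : forall t, P (cis t) \/ P (- cis t)%C).
  { intros t; apply NNPP; intros Hn; apply Hnone; exists t; tauto. }
  destruct (P_or_opp 0) as [P0|P0]; [|rewrite Copp_cis in P0];
    eapply antipodal_selection_misses_circle; eassumption.
Qed.

Section ConeAvoidance.

Variable F : C -> Prop.

Definition sector_free (d : C) (phi rho : R) : Prop :=
  forall b t th, d = cis b -> Rabs (th - b) <= phi -> rho < t -> ~ F (t * cis th)%C.

Lemma sector_free_mono (d : C) (phi rho phi' rho' : R) :
  phi' <= phi -> rho <= rho' -> sector_free d phi rho -> sector_free d phi' rho'.
Proof. intros Hphi Hrho Hd b t th Hb Hth Ht; apply (Hd b t th Hb); lra. Qed.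

Lemma not_escapes_toward_sector_free (d : C) :
  ~ escapes_toward F d -> exists phi rho, 0 < phi /\ sector_free d phi rho.
Proof.
  intros Hd. apply NNPP; intros Hnot. apply Hd; intros del rho Hdel.
  apply NNPP; intros Hfar. apply Hnot; exists (del / 2), (Rmax 0 rho); split; [lra|].
  intros b t th -> Hth Ht Fw. pose proof (Rmax_l 0 rho); pose proof (Rmax_r 0 rho).
  apply Hfar; exists (t * cis th)%C; split; [exact Fw|split].
  - rewrite Cmod_scal_cis, Rabs_pos_eq; lra.
  - rewrite unit_dir_scal by (lra || apply Cmod_cis).
    eapply Rle_lt_trans; [apply Cmod_cis_sub_le|lra].
Qed.

Lemma cone_free_of_directions (xi : C) :
  ~ escapes_toward F xi -> ~ escapes_toward F (Ci * xi)%C ->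
  ~ escapes_toward F (- (Ci * xi))%C ->
  exists phi rho, 0 < phi < PI / 2 /\ 0 < rho /\ forall w, F w ->
    closed_disc0 rho w \/ ~ (whole_cone (Ci * xi)%C phi w \/ half_cone xi phi w).
Proof.
  intros H1 H2 H3.
  destruct (not_escapes_toward_sector_free _ H1) as (phi1 & rho1 & Hphi1 & K1).
  destruct (not_escapes_toward_sector_free _ H2) as (phi2 & rho2 & Hphi2 & K2).
  destruct (not_escapes_toward_sector_free _ H3) as (phi3 & rho3 & Hphi3 & K3).
  set (phi := Rmin 1 (Rmin phi1 (Rmin phi2 phi3))).
  set (rho := Rmax 1 (Rmax rho1 (Rmax rho2 rho3))).
  assert (Hphi : 0 < phi <= 1 /\ phi <= phi1 /\ phi <= phi2 /\ phi <= phi3)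
    by (unfold phi, Rmin; repeat destruct Rle_dec; lra).
  assert (Hrho : 1 <= rho /\ rho1 <= rho /\ rho2 <= rho /\ rho3 <= rho)
    by (unfold rho, Rmax; repeat destruct Rle_dec; lra).
  assert (K1' : sector_free xi phi rho) by (eapply sector_free_mono; [| |exact K1]; lra).
  assert (K2' : sector_free (Ci * xi) phi rho)
    by (eapply sector_free_mono; [| |exact K2]; lra).
  assert (K3' : sector_free (- (Ci * xi)) phi rho)
    by (eapply sector_free_mono; [| |exact K3]; lra).
  exists phi, rho; split; [pose proof PI2_1; lra|split; [lra|]].
  intros w Fw. destruct (Rle_lt_dec (Cmod w) rho) as [Hle|Hgt]; [now left|right].
  intros [(b & t & th & Hb & Hth & ->)|(b & t & th & Hb & Ht & Hth & ->)];
    rewrite Cmod_scal_cis in Hgt.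
  - destruct (Rle_lt_dec 0 t) as [Ht|Ht].
    + rewrite Rabs_pos_eq in Hgt by lra.
      exact (K2' b t th Hb Hth Hgt Fw).
    + rewrite Rabs_left in Hgt by lra.
      replace (t * cis th)%C with (RtoC (- t) * cis (th + PI))%C in Fw
        by (rewrite <- Copp_cis, RtoC_opp; ring).
      apply (K3' (b + PI) (- t) (th + PI)); [| |lra|exact Fw].
      * now rewrite Hb, Copp_cis.
      * now replace (th + PI - (b + PI)) with (th - b) by ring.
  - rewrite Rabs_pos_eq in Hgt by lra.
    exact (K1' b t th Hb Hth Hgt Fw).
Qed.

Theorem cone_free_of_no_antipodal_escape :
  (forall d, Cmod d = 1 -> ~ (escapes_toward F d /\ escapes_toward F (- d)%C)) ->
  exists (xi : C) (phi rho : R),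
    on_unit_circle xi /\ 0 < phi < PI / 2 /\ 0 < rho /\ forall w, F w ->
      closed_disc0 rho w \/ ~ (whole_cone (Ci * xi)%C phi w \/ half_cone xi phi w).
Proof.
  intros Hanti.
  destruct (closed_antipodal_free (escapes_toward F)) as (th & Hc & Hopp).
  { apply escapes_toward_closed. }
  { intros t; apply Hanti, Cmod_cis. }
  assert (Hunit : Cmod (Ci * cis th)%C = 1) by (rewrite Cmod_mult, Cmod_Ci, Cmod_cis; ring).
  destruct (classic (escapes_toward F (Ci * cis th)%C)) as [Hesc|Hnesc].
  - destruct (cone_free_of_directions (- (Ci * cis th))%C) as (phi & rho & Hcone).
    + intros Hopp'; exact (Hanti _ Hunit (conj Hesc Hopp')).
    + rewrite Ci_mul_opp_Ci; exact Hc.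
    + rewrite Ci_mul_opp_Ci; exact Hopp.
    + exists (- (Ci * cis th))%C, phi, rho; split; [|exact Hcone].
      unfold on_unit_circle; now rewrite Cmod_opp.
  - destruct (cone_free_of_directions (Ci * cis th)%C) as (phi & rho & Hcone).
    + exact Hnesc.
    + rewrite Ci_mul_Ci; exact Hopp.
    + rewrite Ci_mul_Ci, Copp_involutive; exact Hc.
    + now exists (Ci * cis th)%C, phi, rho.
Qed.

End ConeAvoidance.

Theorem lemma2 (u v : C -> R) :
  harmonic u -> harmonic v ->
  (* D(R_f) contains no pair of antipodal points, where R_f = f(C), f = u + i v *)
  ~ (exists d : C,
       asymptotic_direction (fun w => exists z : C, w = (u z, v z)) d /\
       asymptotic_direction (fun w => exists z : C, w = (u z, v z)) (Copp d)) ->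
  exists (xi : C) (phi rho : R),
    on_unit_circle xi /\ 0 < phi < PI / 2 /\ 0 < rho /\
    forall z : C,
      closed_disc0 rho (u z, v z) \/
      ~ (whole_cone (Cmult Ci xi) phi (u z, v z) \/ half_cone xi phi (u z, v z)).
Proof.
  intros _ _ Hno.
  destruct (cone_free_of_no_antipodal_escape (fun w => exists z : C, w = (u z, v z)))
    as (xi & phi & rho & Hxi & Hphi & Hrho & Hcone).
  - intros d Hd [Hesc Hesc_opp]. apply Hno; exists d; split;
      apply escapes_toward_asymptotic_direction; rewrite ?Cmod_opp; assumption.
  - exists xi, phi, rho; do 3 (split; [assumption|]).
    intros z; apply Hcone; now exists z.
Qed.
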